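(* There is a constant $c$ such that for every pair of positive integers $k,v$ there is an existential, negation-free first-order formula $\beta(g;x_1,\dots,x_k)$ in the language of groups with $|\beta|\le c(k\log v+(\log v)^2)$ such that for every group $G$ with $|G|\le v$ and all $g,x_1,\dots,x_k\in G$: $G\models\beta(g;x_1,\dots,x_k)$ if and only if $g\in\langle x_1,\dots,x_k\rangle$.
   Context: The length $|\phi|$ of a formula is its number of symbols, each variable counting as a single symbol. Here $\log m=\min\{r\in\mathbb N: 2^r\ge m\}$. The language of groups has multiplication, inversion and identity. *)

From mathcomp Require Import all_boot all_fingroup.
Set Implicit Arguments. Unset Strict Implicit. Unset Printing Implicit Defensive.
Local Open Scope group_scope.

Inductive gterm : Type :=
| TVar of nat
| TOne
| TMul of gterm & gterm
| TInv of gterm.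

Inductive pform : Type :=
| PEq of gterm & gterm
| PAnd of pform & pform
| POr of pform & pform.

Inductive eform : Type :=
| EQF of pform
| EEx of nat & eform.

(* Length = number of symbols, each variable counting as one symbol. *)
Fixpoint tsize (t : gterm) : nat :=
  match t with
  | TVar _ => 1
  | TOne => 1
  | TMul a b => (tsize a + tsize b).+1
  | TInv a => (tsize a).+1
  end.

Fixpoint psize (p : pform) : nat :=
  match p with
  | PEq a b => (tsize a + tsize b).+1
  | PAnd a b => (psize a + psize b).+1
  | POr a b => (psize a + psize b).+1
  end.

(* "exists x" contributes two symbols: the quantifier and the variable. *)
Fixpoint esize (f : eform) : nat :=
  match f with
  | EQF p => psize p
  | EEx _ f => (esize f).+2
  end.

Fixpoint tfv_lt (n : nat) (t : gterm) : bool :=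
  match t with
  | TVar i => i < n
  | TOne => true
  | TMul a b => tfv_lt n a && tfv_lt n b
  | TInv a => tfv_lt n a
  end.

Fixpoint pfv_lt (n : nat) (p : pform) : bool :=
  match p with
  | PEq a b => tfv_lt n a && tfv_lt n b
  | PAnd a b => pfv_lt n a && pfv_lt n b
  | POr a b => pfv_lt n a && pfv_lt n b
  end.

Fixpoint tfv (t : gterm) : seq nat :=
  match t with
  | TVar i => [:: i]
  | TOne => [::]
  | TMul a b => tfv a ++ tfv b
  | TInv a => tfv a
  end.

Fixpoint pfv (p : pform) : seq nat :=
  match p with
  | PEq a b => tfv a ++ tfv b
  | PAnd a b => pfv a ++ pfv b
  | POr a b => pfv a ++ pfv b
  end.

Fixpoint efv (f : eform) : seq nat :=
  match f with
  | EQF p => pfv p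
  | EEx x f => filter (fun i => i != x) (efv f)
  end.

(* Semantics in a group G (a subgroup of a finGroupType, quantifiers range over G). *)
Section Sem.
Variable gT : finGroupType.

Fixpoint teval (e : nat -> gT) (t : gterm) : gT :=
  match t with
  | TVar i => e i
  | TOne => 1
  | TMul a b => teval e a * teval e b
  | TInv a => (teval e a)^-1
  end.

Fixpoint psat (e : nat -> gT) (p : pform) : Prop :=
  match p with
  | PEq a b => teval e a = teval e b
  | PAnd a b => psat e a /\ psat e b
  | POr a b => psat e a \/ psat e b
  end.

Definition upd (e : nat -> gT) (x : nat) (y : gT) : nat -> gT :=
  fun i => if i == x then y else e i.

Fixpoint esat (G : {set gT}) (e : nat -> gT) (f : eform) : Prop :=
  match f with
  | EQF p => psat e p
  | EEx x f => exists2 y, y \in G & esat G (upd e x y) f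
  end.
End Sem.

(* log m = min { r : 2^r >= m } *)
Definition clog (m : nat) : nat := up_log 2 m.

(* Let X = {x_1, ..., x_k} and H = <X>.  For z_0, ..., z_(n-1) let K be the cube
   {z_0^e_0 ... z_(n-1)^e_(n-1) | e in {0,1}^n}.  Extend the sequence greedily: while
   H is not contained in K^-1 K, there are u in K^-1 K and x in X with z := u x outside
   K^-1 K, and then K and K z are disjoint, so the cube doubles.  Since |H| <= v < 2^t
   for t = log v + 1, after t steps H is contained in K^-1 K.  Conversely, every z_i
   lying in K_i^-1 K_i (X u {1}) (K_i the cube of z_0, ..., z_(i-1)) belongs to H.
   So g is in H iff there is such a chain z_0, ..., z_(t-1) with g in K_t^-1 K_t.
   The formula guesses the z_i, the y_i in X u {1} and, for each of the 2(t+1) cube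
   words involved, which factors are present; this takes O(t^2 + t k) symbols. *)

From mathcomp Require Import all_boot all_fingroup zify.
Set Implicit Arguments. Unset Strict Implicit. Unset Printing Implicit Defensive.

Definition eexs (xs : seq nat) (f : eform) : eform := foldr EEx f xs.
Definition pands (ps : seq pform) : pform := foldr PAnd (PEq TOne TOne) ps.
Definition pors (p : pform) (ps : seq pform) : pform := foldr POr p ps.
Definition tprod (ts : seq gterm) : gterm := foldr TMul TOne ts.

Section Combinators.
Variable T : eqType.
Implicit Types (s : seq T) (m n : nat).

Lemma tsize_tprod_le (F : T -> gterm) s m :
  {in s, forall x, tsize (F x) <= m} -> tsize (tprod (map F s)) <= size s * m.+1 + 1.
Proof.
elim: s => //= x s IH hF; have := IH (sub_in1 (fun y => @mem_behead _ (x :: s) y) hF).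
by have := hF x (mem_head _ _); rewrite mulSn; lia.
Qed.

Lemma psize_pands_le (F : T -> pform) s m :
  {in s, forall x, psize (F x) <= m} -> psize (pands (map F s)) <= size s * m.+1 + 3.
Proof.
elim: s => //= x s IH hF; have := IH (sub_in1 (fun y => @mem_behead _ (x :: s) y) hF).
by have := hF x (mem_head _ _); rewrite mulSn; lia.
Qed.

Lemma psize_pors_le p (F : T -> pform) s m :
  {in s, forall x, psize (F x) <= m} -> psize (pors p (map F s)) <= psize p + size s * m.+1.
Proof.
elim: s => /= [|x s IH hF]; first by rewrite addn0.
have := IH (sub_in1 (fun y => @mem_behead _ (x :: s) y) hF).
by have := hF x (mem_head _ _); rewrite mulSn; lia.
Qed.

Lemma tfv_lt_tprod n (F : T -> gterm) s :
  tfv_lt n (tprod (map F s)) = all (fun x => tfv_lt n (F x)) s.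
Proof. by elim: s => //= x s ->. Qed.

Lemma pfv_lt_pands n (F : T -> pform) s :
  pfv_lt n (pands (map F s)) = all (fun x => pfv_lt n (F x)) s.
Proof. by elim: s => //= x s ->. Qed.

Lemma pfv_lt_pors n p (F : T -> pform) s :
  pfv_lt n (pors p (map F s)) = all (fun x => pfv_lt n (F x)) s && pfv_lt n p.
Proof. by elim: s => //= x s ->; rewrite andbA. Qed.

End Combinators.

Lemma esize_eexs xs p : esize (eexs xs (EQF p)) = (size xs).*2 + psize p.
Proof. by elim: xs => //= x xs ->; rewrite doubleS. Qed.

Lemma pfv_ltE n p : pfv_lt n p = all (fun i => i < n) (pfv p).
Proof.
have tfv_ltE t : tfv_lt n t = all (fun i => i < n) (tfv t).
  by elim: t => [i||a ha b hb|a ha] //=; rewrite ?andbT ?all_cat ?ha ?hb.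
by elim: p => [a b|a ha b hb|a ha b hb] /=; rewrite all_cat ?tfv_ltE ?ha ?hb.
Qed.

Lemma efv_eexs xs f : efv (eexs xs f) = [seq i <- efv f | i \notin xs].
Proof.
elim: xs => [|x xs IH] /=; first by rewrite (@eq_filter _ _ predT) ?filter_predT.
by rewrite IH -filter_predI; apply: eq_filter => i; rewrite /= in_cons negb_or.
Qed.

Section FormulaSemantics.
Variable gT : finGroupType.
Implicit Types (e : nat -> gT) (G : {group gT}).
Local Open Scope group_scope.

Lemma eq_teval e1 e2 t : e1 =1 e2 -> teval e1 t = teval e2 t.
Proof. by move=> h; elim: t => //= [a -> b ->| a ->]. Qed.

Lemma eq_psat e1 e2 p : e1 =1 e2 -> psat e1 p <-> psat e2 p.
Proof.
move=> h; elim: p => /= [a b|a ha b hb|a ha b hb]; first by rewrite !(eq_teval _ h).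
all: by rewrite ha hb.
Qed.

Lemma esat_eexs G e xs p :
  esat G e (eexs xs (EQF p)) <->
  exists2 f : nat -> gT, (forall i, f i \in G) & psat (fun i => if i \in xs then f i else e i) p.
Proof.
elim: xs e => [|x xs IH] e /=.
  by split=> [he | [f _ hf]] //; exists (fun=> 1) => // i; exact: group1.
split=> [[y yG /IH [f fG hf]] | [f fG hf]].
  exists (fun i => if i \in xs then f i else y) => [i|]; first by case: ifP.
  apply: (eq_psat _ _).1 hf => i; rewrite in_cons /upd.
  by case: (i \in xs); case: (i == x).
exists (f x) => //; apply/IH; exists f => //; apply: (eq_psat _ _).1 hf => i.
by rewrite in_cons /upd; case: (i \in xs); case: eqP => [->|]; rewrite ?orbT.
Qed.

Variables (T : eqType) (e : nat -> gT).

Lemma psat_pands (F : T -> pform) s :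
  psat e (pands (map F s)) <-> {in s, forall x, psat e (F x)}.
Proof.
elim: s => [|x s IH] /=; first by [].
rewrite IH; split=> [[hx hs] y | hF].
  by rewrite in_cons => /predU1P [-> | /hs].
by split=> [|y hy]; apply: hF; rewrite ?mem_head // in_cons hy orbT.
Qed.

Lemma psat_pors p (F : T -> pform) s :
  psat e (pors p (map F s)) <-> psat e p \/ exists2 x, x \in s & psat e (F x).
Proof.
elim: s => [|x s IH] /=; first by split=> [|[|[]]]; [left|..].
rewrite IH; split=> [[hx|[hp|[y hy hF]]] | [hp|[y]]].
- by right; exists x; rewrite ?mem_head.
- by left.
- by right; exists y; rewrite // in_cons hy orbT.
- by right; left.
- by rewrite in_cons => /predU1P [-> | hy] hF; [left | right; right; exists y].
Qed.

Lemma teval_tprod (F : T -> gterm) s :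
  teval e (tprod (map F s)) = \prod_(x <- s) teval e (F x).
Proof. by elim: s => [|x s /= ->]; rewrite ?big_nil ?big_cons. Qed.

End FormulaSemantics.

Section Cube.
Variable gT : finGroupType.
Implicit Types (zs : seq gT) (b : nat -> bool) (A S X : {set gT}) (H : {group gT}).
Local Open Scope group_scope.

Definition cube_word zs b n : gT := \prod_(0 <= l < n) (if b l then nth 1 zs l else 1).

Definition cube zs : {set gT} := foldl (fun K z => K :|: K :* z) [set 1] zs.

Lemma cube_rcons zs z : cube (rcons zs z) = cube zs :|: cube zs :* z.
Proof. exact: foldl_rcons. Qed.

Lemma eq_cube_word zs b1 b2 n :
  (forall l, l < n -> b1 l = b2 l) -> cube_word zs b1 n = cube_word zs b2 n.
Proof. by move=> hb; apply: eq_big_nat => l /andP [_ /hb ->]. Qed.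

Lemma cube_word_rcons zs z b n :
  n <= size zs -> cube_word (rcons zs z) b n = cube_word zs b n.
Proof.
move=> hn; apply: eq_big_nat => l /andP [_ hl].
by rewrite nth_rcons (leq_trans hl hn).
Qed.

Lemma cube_wordS_rcons zs z b :
  cube_word (rcons zs z) b (size zs).+1 =
  cube_word zs b (size zs) * (if b (size zs) then z else 1).
Proof.
by rewrite /cube_word big_nat_recr //= -/(cube_word _ _ _) cube_word_rcons // nth_rcons ltnn eqxx.
Qed.

Lemma cube_word_mem H zs b n :
  (forall l, l < n -> nth 1 zs l \in H) -> cube_word zs b n \in H.
Proof.
move=> hz; rewrite /cube_word big_seq; apply: group_prod => l.
by rewrite mem_index_iota => /andP [_ /hz]; case: (b l).
Qed.

Lemma cubeP zs a : a \in cube zs <-> exists b, a = cube_word zs b (size zs).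
Proof.
elim/last_ind: zs a => [|zs z IH] a.
  have w0 b : cube_word [::] b 0 = 1 by rewrite /cube_word big_mkord big_ord0.
  by rewrite inE; split=> [/eqP ->|[b ->]]; [exists xpred0 | ]; rewrite w0.
rewrite cube_rcons inE mem_rcoset size_rcons.
split=> [/orP [/IH [b ->] | /IH [b hb]] | [b ->]].
- exists (fun l => (l != size zs) && b l).
  rewrite cube_wordS_rcons eqxx mulg1; apply: eq_cube_word => l hl.
  by rewrite (ltn_eqF hl).
- exists (fun l => (l == size zs) || b l).
  rewrite cube_wordS_rcons eqxx -(mulgKV z a) hb; congr (_ * _).
  by apply: eq_cube_word => l hl; rewrite (ltn_eqF hl).
- have hw : cube_word zs b (size zs) \in cube zs by apply/IH; exists b.
  by rewrite cube_wordS_rcons; case: (b (size zs)); rewrite ?mulg1 ?mulgK hw ?orbT.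
Qed.

Lemma cube_sub H zs : (forall l, nth 1 zs l \in H) -> cube zs \subset H.
Proof. by move=> hz; apply/subsetP => a /cubeP [b ->]; apply: cube_word_mem. Qed.

Lemma card_setU_rcoset A z : z \notin A^-1 * A -> #|A :|: A :* z| = #|A|.*2.
Proof.
move=> hz; rewrite cardsU card_rcoset -addnn.
suff -> : A :&: A :* z = set0 by rewrite cards0 subn0.
apply/setP => x; rewrite !inE mem_rcoset; apply/andP => -[hx hxz].
case/negP: hz; apply/mulsgP; exists (x * z^-1)^-1 x; rewrite ?inE ?invgK //.
by rewrite invMg invgK mulgKV.
Qed.

Lemma gen_sub_mulr_closed S X : 1 \in S -> S * X \subset S -> <<X>> \subset S.
Proof.
move=> S1 sSX_S; apply/subsetP => _ /gen_prodgP [n [c hc ->]].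
elim: n c hc => [|n IH] c hc; first by rewrite big_ord0.
rewrite big_ord_recr /=; apply: (subsetP sSX_S); apply/mulsgP.
by exists (\prod_(i < n) c (widen_ord (leqnSn n) i)) (c ord_max) => //; apply: IH.
Qed.

End Cube.

Section CubeChain.
Variable gT : finGroupType.
Implicit Types (zs : seq gT) (y : nat -> gT) (X : {set gT}) (H : {group gT}).
Local Open Scope group_scope.

Definition cube_chain X zs y (bits : bool -> nat -> nat -> bool) :=
  forall i, i < size zs -> y i \in 1 |: X /\
    nth 1 zs i = (cube_word zs (bits false i) i)^-1 * cube_word zs (bits true i) i * y i.

Lemma cube_chain_mem H X zs y bits :
  X \subset H -> cube_chain X zs y bits -> forall l, nth 1 zs l \in H.
Proof.
move=> sXH hzs; elim/ltn_ind => l IH.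
have [/hzs [/setU1P hy ->] | hl] := ltnP l (size zs); last by rewrite nth_default.
rewrite !groupM ?groupV ?cube_word_mem //.
by case: hy => [-> | /(subsetP sXH)].
Qed.

Lemma cube_word_gen_mem X zs y bits b n :
  cube_chain X zs y bits -> cube_word zs b n \in <<X>>.
Proof. by move=> hzs; apply: cube_word_mem => l _; apply: (cube_chain_mem (subset_gen X) hzs). Qed.

Lemma cube_chain_rcons X zs y bits x b0 :
  cube_chain X zs y bits -> x \in 1 |: X ->
  cube_chain X (rcons zs ((cube_word zs (b0 false) (size zs))^-1 *
                          cube_word zs (b0 true) (size zs) * x))
    (fun i => if i == size zs then x else y i)
    (fun s i => if i == size zs then b0 s else bits s i).
Proof.
move=> hzs hx i; rewrite size_rcons ltnS leq_eqVlt => /predU1P [-> | hi].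
  by rewrite eqxx nth_rcons ltnn eqxx !cube_word_rcons.
by rewrite (ltn_eqF hi) nth_rcons hi !cube_word_rcons ?(ltnW hi) //; apply: hzs.
Qed.

Lemma cube_chain_exists X t : exists zs y bits,
  [/\ size zs = t, cube_chain X zs y bits &
      <<X>> \subset (cube zs)^-1 * cube zs \/ #|cube zs| = (2 ^ t)%N].
Proof.
elim: t => [|t [zs [y [bits [<- hzs hXK]]]]].
  by exists [::], (fun=> 1), (fun _ _ _ => false); split=> //; right; rewrite cards1.
set K := cube zs.
have [sXK | nsXK] := boolP (<<X>> \subset K^-1 * K).
  exists (rcons zs ((cube_word zs xpred0 (size zs))^-1 * cube_word zs xpred0 (size zs) * 1)).
  exists (fun i => if i == size zs then 1 else y i).
  exists (fun s i => if i == size zs then xpred0 else bits s i).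
  split; [by rewrite size_rcons | exact: cube_chain_rcons (setU11 _ _) |].
  left; apply: (subset_trans sXK); rewrite cube_rcons -/K.
  by apply: mulgSS; rewrite ?invSg subsetUl.
have KK1 : 1 \in K^-1 * K.
  have K1 : 1 \in K by apply/cubeP; exists xpred0; rewrite /cube_word big1.
  by apply/mulsgP; exists 1 1; rewrite ?inE ?invg1 ?mulg1.
have : ~~ (K^-1 * K * X \subset K^-1 * K).
  by apply: contra nsXK; apply: gen_sub_mulr_closed.
case/subsetPn => _ /mulsgP [_ x /mulsgP [a' b ha' hb ->] hx ->] hzK.
have /cubeP [ba ea] : a'^-1 \in K by move: ha'; rewrite inE.
have /cubeP [bb eb] := hb.
exists (rcons zs ((cube_word zs ba (size zs))^-1 * cube_word zs bb (size zs) * x)).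
exists (fun i => if i == size zs then x else y i).
exists (fun s i => if i == size zs then (if s then bb else ba) else bits s i).
split; [by rewrite size_rcons | by apply: cube_chain_rcons; rewrite // setU1r |].
right; rewrite cube_rcons -/K -ea -eb invgK card_setU_rcoset // expnS mul2n.
by case: hXK => [/(negP nsXK) [] | ->].
Qed.

Lemma cube_chain_generates X t : #|<<X>>| < (2 ^ t)%N -> exists zs y bits,
  [/\ size zs = t, cube_chain X zs y bits & <<X>> \subset (cube zs)^-1 * cube zs].
Proof.
move=> hX; have [zs [y [bits [hsz hzs [sXK | hK]]]]] := cube_chain_exists X t.
  by exists zs, y, bits.
suff : #|cube zs| <= #|<<X>>| by rewrite hK leqNgt hX.
by apply/subset_leq_card/cube_sub/(cube_chain_mem (subset_gen X) hzs).
Qed.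

End CubeChain.

Section Formula.
Variables k t : nat.

(* Variables [0, ..., k] are g, x_1, ..., x_k; the witnesses [wit_var q m] follow in
   blocks of length t+1: block 0 holds the z_m, block 1 the y_m, and block
   [2 + s * (t+1) + i] the m-th factor of the cube word a_i (s = false) or b_i (s = true). *)
Definition wit_var q m := k.+1 + (q * t.+1 + m).
Definition zvar i := wit_var 0 i.
Definition yvar i := wit_var 1 i.
Definition wvar (s : bool) i l := wit_var (2 + (s * t.+1 + i)) l.
Definition nwit := (2 + 2 * t.+1) * t.+1.

Definition cube_term s i := tprod [seq TVar (wvar s i l) | l <- iota 0 i].
Definition quot_term i := TMul (TInv (cube_term false i)) (cube_term true i).
Definition chain_eq i := PEq (TVar (zvar i)) (TMul (quot_term i) (TVar (yvar i))).
Definition gen_choice i :=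
  pors (PEq (TVar (yvar i)) TOne) [seq PEq (TVar (yvar i)) (TVar j.+1) | j <- iota 0 k].
Definition bit_choice s i l :=
  POr (PEq (TVar (wvar s i l)) (TVar (zvar l))) (PEq (TVar (wvar s i l)) TOne).
Definition bit_choices i :=
  pands [seq PAnd (bit_choice false i l) (bit_choice true i l) | l <- iota 0 i].

Definition chain_matrix :=
  PAnd (pands (map chain_eq (iota 0 t)))
 (PAnd (pands (map gen_choice (iota 0 t)))
 (PAnd (pands (map bit_choices (iota 0 t.+1)))
       (PEq (TVar 0) (quot_term t)))).

Definition beta := eexs (iota k.+1 nwit) (EQF chain_matrix).

Lemma wit_var_lt q m : q < 2 + 2 * t.+1 -> m < t.+1 -> wit_var q m < k.+1 + nwit.
Proof.
move=> hq hm; rewrite ltn_add2l /nwit.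
by apply: (@leq_trans (q.+1 * t.+1)); [rewrite mulSn; lia | rewrite leq_mul2r hq orbT].
Qed.

Lemma wit_var_gt q m : k < wit_var q m.
Proof. exact: leq_addr. Qed.

Lemma wit_varK q m : m < t.+1 ->
  (wit_var q m - k.+1) %/ t.+1 = q /\ (wit_var q m - k.+1) %% t.+1 = m.
Proof. by move=> hm; rewrite addKn divnMDl ?modnMDl ?divn_small ?modn_small ?addn0. Qed.

Lemma tsize_quot_term i : tsize (quot_term i) <= 4 * i + 4.
Proof.
have hc s : tsize (cube_term s i) <= i * 2 + 1.
  by rewrite -[i in i * 2](size_iota 0 i); apply: tsize_tprod_le.
by have := hc false; have := hc true; rewrite /=; lia.
Qed.

Lemma psize_chain_matrix :
  psize chain_matrix <= 4 * k * t + 20 * t ^ 2 + 37 * t + 24.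
Proof.
have h1 : psize (pands (map chain_eq (iota 0 t))) <= size (iota 0 t) * (4 * t + 8).+1 + 3.
  apply: psize_pands_le => i; rewrite mem_iota /= => hi.
  by have := tsize_quot_term i; rewrite /=; lia.
have h2 : psize (pands (map gen_choice (iota 0 t))) <= size (iota 0 t) * (4 * k + 3).+1 + 3.
  apply: psize_pands_le => i _; apply: (@leq_trans (3 + size (iota 0 k) * 4)).
    exact: psize_pors_le.
  by rewrite size_iota; lia.
have h3 : psize (pands (map bit_choices (iota 0 t.+1))) <= size (iota 0 t.+1) * (16 * t + 3).+1 + 3.
  apply: psize_pands_le => i; rewrite mem_iota /= => hi.
  apply: (@leq_trans (size (iota 0 i) * 16 + 3)); first exact: psize_pands_le.
  by rewrite size_iota; lia.
have h4 := tsize_quot_term t; rewrite !size_iota in h1 h2 h3.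
have -> : psize chain_matrix =
  (psize (pands (map chain_eq (iota 0 t))) + (psize (pands (map gen_choice (iota 0 t))) +
   (psize (pands (map bit_choices (iota 0 t.+1))) + (tsize (quot_term t)).+2).+1).+1).+1 by [].
nia.
Qed.

Lemma esize_beta : esize beta <= 4 * k * t + 24 * t ^ 2 + 49 * t + 32.
Proof. by rewrite esize_eexs size_iota /nwit; have := psize_chain_matrix; nia. Qed.

Lemma zvar_lt i : i < t.+1 -> zvar i < k.+1 + nwit.
Proof. exact: wit_var_lt. Qed.

Lemma yvar_lt i : i < t.+1 -> yvar i < k.+1 + nwit.
Proof. exact: wit_var_lt. Qed.

Lemma wvar_lt s i l : i <= t -> l < t.+1 -> wvar s i l < k.+1 + nwit.
Proof. by case: s => hi; apply: wit_var_lt; rewrite /= ?mul1n ?mul0n; lia. Qed.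

Lemma tfv_lt_cube_term s i : i <= t -> tfv_lt (k.+1 + nwit) (cube_term s i).
Proof.
move=> hi; rewrite tfv_lt_tprod; apply/allP => l.
by rewrite mem_iota => /andP [_ hl]; apply: wvar_lt; lia.
Qed.

Lemma tfv_lt_quot_term i : i <= t -> tfv_lt (k.+1 + nwit) (quot_term i).
Proof. by move=> hi; apply/andP; split; apply: tfv_lt_cube_term. Qed.

Lemma efv_beta : all (fun i => i < k.+1) (efv beta).
Proof.
suff : pfv_lt (k.+1 + nwit) chain_matrix.
  rewrite pfv_ltE efv_eexs all_filter => /allP hfv; apply/allP => i /hfv hi.
  by apply/implyP; rewrite mem_iota; lia.
set N := k.+1 + nwit.
have -> : pfv_lt N chain_matrix =
  [&& pfv_lt N (pands (map chain_eq (iota 0 t))), pfv_lt N (pands (map gen_choice (iota 0 t))),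
      pfv_lt N (pands (map bit_choices (iota 0 t.+1))) & (0 < N) && tfv_lt N (quot_term t)] by [].
apply/and4P; split; last by rewrite ltn_addr ?tfv_lt_quot_term.
all: rewrite pfv_lt_pands; apply/allP => i; rewrite mem_iota => /andP [_ hi].
- by apply/and3P; split; [apply: zvar_lt | apply: tfv_lt_quot_term | apply: yvar_lt]; lia.
- rewrite pfv_lt_pors; apply/andP; split; last by apply/andP; split; [apply: yvar_lt; lia |].
  apply/allP => j; rewrite mem_iota => /andP [_ hj].
  by apply/andP; split; [apply: yvar_lt | apply: ltn_addr]; lia.
- rewrite pfv_lt_pands; apply/allP => l; rewrite mem_iota => /andP [_ hl].
  by repeat (apply/andP; split); try apply: wvar_lt; try apply: zvar_lt; try lia.
Qed.

End Formula.

Section ChainMatrixSemantics.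
Variables (gT : finGroupType) (k t : nat).
Implicit Types (E : nat -> gT) (zs : seq gT) (y : nat -> gT).
Local Open Scope group_scope.

Definition gens E : {set gT} := [set E (val j).+1 | j : 'I_k].
Definition chain_of E : seq gT := [seq E (zvar k t i) | i <- iota 0 t].
Definition bits_of E (s : bool) i l : bool := E (wvar k t s i l) == E (zvar k t l).

Lemma nth_chain_of E i : i < t -> nth 1 (chain_of E) i = E (zvar k t i).
Proof. by move=> hi; rewrite (nth_map 0) ?size_iota // nth_iota. Qed.

Lemma teval_cube_term E zs (b : nat -> bool) s i :
  (forall l, l < i -> E (wvar k t s i l) = if b l then nth 1 zs l else 1) ->
  teval E (cube_term k t s i) = cube_word zs b i.
Proof.
move=> hW; rewrite teval_tprod /cube_word /index_iota subn0 big_seq [RHS]big_seq.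
by apply: eq_bigr => l; rewrite mem_iota => /andP [_ /hW].
Qed.

Lemma wvar_bits_of E s i l : i <= t -> l < i -> psat E (bit_choices k t i) ->
  E (wvar k t s i l) = if bits_of E s i l then nth 1 (chain_of E) l else 1.
Proof.
move=> hi hl /psat_pands /(_ l); rewrite mem_iota hl => /(_ isT) /= [hf ht].
rewrite nth_chain_of ?(leq_trans hl) // /bits_of.
by case: eqP => // hne; case: s hne; [case: ht | case: hf] => -> // /(_ erefl).
Qed.

Lemma psat_chain_matrix E : psat E (chain_matrix k t) <->
  [/\ psat E (pands (map (chain_eq k t) (iota 0 t))),
       psat E (pands (map (gen_choice k t) (iota 0 t))),
       psat E (pands (map (bit_choices k t) (iota 0 t.+1))) &
       E 0 = teval E (quot_term k t t)].
Proof. by split=> [[? [? []]] | []]. Qed.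

Lemma chain_matrix_sound E : psat E (chain_matrix k t) ->
  cube_chain (gens E) (chain_of E) (fun i => E (yvar k t i)) (bits_of E) /\
  E 0 = (cube_word (chain_of E) (bits_of E false t) t)^-1 *
        cube_word (chain_of E) (bits_of E true t) t.
Proof.
case/psat_chain_matrix => /psat_pands hz /psat_pands hy /psat_pands hw hg.
have hcube s i : i <= t ->
    teval E (cube_term k t s i) = cube_word (chain_of E) (bits_of E s i) i.
  move=> hi; apply: teval_cube_term => l hl; apply: wvar_bits_of => //.
  by apply: hw; rewrite mem_iota ltnS.
split; last by rewrite hg /= !hcube.
move=> i; rewrite size_map size_iota => hi; have hit : i \in iota 0 t by rewrite mem_iota.
split; last by rewrite nth_chain_of //; move: (hz i hit) => /= ->; rewrite !hcube // ltnW.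
case/psat_pors: (hy i hit) => [/= -> | [j]]; first exact: setU11.
by rewrite mem_iota /= => hj ->; apply/setU1r/imsetP; exists (Ordinal hj).
Qed.

Lemma chain_matrix_complete E zs y bits (bt : bool -> nat -> bool) :
  size zs = t -> cube_chain (gens E) zs y bits ->
  (forall i, i < t -> E (zvar k t i) = nth 1 zs i) ->
  (forall i, i < t -> E (yvar k t i) = y i) ->
  (forall s i l, i < t -> l < i -> E (wvar k t s i l) = if bits s i l then nth 1 zs l else 1) ->
  (forall s l, l < t -> E (wvar k t s t l) = if bt s l then nth 1 zs l else 1) ->
  E 0 = (cube_word zs (bt false) t)^-1 * cube_word zs (bt true) t ->
  psat E (chain_matrix k t).
Proof.
move=> hsz hzs hZ hY hW hWt hg.
have hcube s i : i < t -> teval E (cube_term k t s i) = cube_word zs (bits s i) i.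
  by move=> hi; apply: teval_cube_term => l hl; apply: hW.
have hcube_t s : teval E (cube_term k t s t) = cube_word zs (bt s) t.
  by apply: teval_cube_term => l hl; apply: hWt.
apply/psat_chain_matrix; split; last by rewrite hg /= !hcube_t.
- apply/psat_pands => i; rewrite mem_iota => /andP [_ hi] /=.
  by rewrite hZ // hY // !hcube //; case: (hzs i); rewrite ?hsz.
- apply/psat_pands => i; rewrite mem_iota => /andP [_ hi]; apply/psat_pors.
  case: (hzs i); rewrite ?hsz // => /setU1P [hy1 | /imsetP [j _ hyj]] _; first by left; rewrite /= hY.
  by right; exists (val j); rewrite ?mem_iota //= hY.
- apply/psat_pands => i; rewrite mem_iota ltnS => /andP [_ hi].
  apply/psat_pands => l; rewrite mem_iota => /andP [_ hl] /=.
  rewrite hZ; last exact: leq_trans hl hi.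
  have [hit | eit] : i < t \/ i = t by lia.
    by rewrite !hW //; split; case: ifP; by [left | right].
  by subst i; rewrite !hWt //; split; case: ifP; by [left | right].
Qed.
End ChainMatrixSemantics.

Section BetaSemantics.
Variables (gT : finGroupType) (k t : nat).
Implicit Types (G : {group gT}) (e f : nat -> gT).
Local Open Scope group_scope.

Definition extend_env (e f : nat -> gT) i : gT := if i \in iota k.+1 (nwit t) then f i else e i.

Lemma extend_env_low e f j : j <= k -> extend_env e f j = e j.
Proof. by move=> hj; rewrite /extend_env mem_iota ltnNge ltnS hj. Qed.

Lemma extend_env_wit e f c : k < c -> c < k.+1 + nwit t -> extend_env e f c = f c.
Proof. by move=> hkc hc; rewrite /extend_env mem_iota hkc hc. Qed.

Lemma gens_extend_env e f : gens k (extend_env e f) = gens k e.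
Proof. by apply: (eq_imset _ _) => j; rewrite /= extend_env_low. Qed.

Lemma beta_sound G e : esat G e (beta k t) -> e 0 \in <<gens k e>>.
Proof.
case/esat_eexs => f _; rewrite -/(extend_env e f) => /chain_matrix_sound [hzs].
rewrite gens_extend_env extend_env_low // in hzs * => ->.
by apply: groupM; rewrite ?groupV; apply: cube_word_gen_mem hzs.
Qed.

Definition witness_env (Z Y : nat -> gT) (W : bool -> nat -> nat -> gT) (c : nat) : gT :=
  let m := (c - k.+1) %% t.+1 in
  match (c - k.+1) %/ t.+1 with
  | 0%N => Z m
  | 1%N => Y m
  | q.+2 => W (0 < q %/ t.+1) (q %% t.+1) m
  end.

Section WitnessEnv.
Variables (Z Y : nat -> gT) (W : bool -> nat -> nat -> gT).

Lemma witness_env_zvar i : i < t.+1 -> witness_env Z Y W (zvar k t i) = Z i.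
Proof. by move=> hi; rewrite /witness_env; have [-> ->] := @wit_varK k t 0 i hi. Qed.

Lemma witness_env_yvar i : i < t.+1 -> witness_env Z Y W (yvar k t i) = Y i.
Proof. by move=> hi; rewrite /witness_env; have [-> ->] := @wit_varK k t 1 i hi. Qed.

Lemma witness_env_wvar s i l :
  i < t.+1 -> l < t.+1 -> witness_env Z Y W (wvar k t s i l) = W s i l.
Proof.
move=> hi hl; rewrite /witness_env; have [-> ->] := @wit_varK k t (2 + (s * t.+1 + i)) l hl.
by rewrite add2n /= divnMDl // divn_small // addn0 lt0b modnMDl modn_small.
Qed.

End WitnessEnv.

Lemma beta_complete G e : (forall i, e i \in G) -> #|G| < (2 ^ t)%N ->
  e 0 \in <<gens k e>> -> esat G e (beta k t).
Proof.
move=> he hG hg; set X := gens k e.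
have sXG : <<X>> \subset G by rewrite gen_subG; apply/subsetP => _ /imsetP [j _ ->].
have [zs [y [bits [hsz hzs sXK]]]] :=
  cube_chain_generates (leq_ltn_trans (subset_leq_card sXG) hG).
have /mulsgP [a' b ha' hb hge] := subsetP sXK _ hg.
have /cubeP [ba ea] : a'^-1 \in cube zs by move: ha'; rewrite inE.
have /cubeP [bb eb] := hb.
pose bt s := if s then bb else ba.
pose W s i l := if (if i == t then bt s l else bits s i l) then nth 1 zs l else 1.
(* [y] is unconstrained from index [t] on, but every witness must lie in [G]. *)
pose f := witness_env (nth 1 zs) (fun i => if i < t then y i else 1) W.
have hzsX l : nth 1 zs l \in <<X>> := cube_chain_mem (subset_gen X) hzs l.
apply/esat_eexs; exists f; rewrite -/(extend_env e f).
  move=> c; apply: (subsetP sXG); rewrite /f /witness_env.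
  case: (_ %/ _) => [|[|q]] //; last by rewrite /W; case: ifP.
  case: ifP => hi; last exact: group1.
  have [/setU1P [-> _ | /mem_gen //]] := hzs _ (leq_trans hi (eq_leq (esym hsz))).
  exact: group1.
apply: (chain_matrix_complete hsz (y := y) (bits := bits) (bt := bt)).
- by rewrite gens_extend_env.
- move=> i hi; have hi1 : i < t.+1 := ltnW hi.
  by rewrite extend_env_wit ?wit_var_gt ?zvar_lt // /f witness_env_zvar.
- move=> i hi; have hi1 : i < t.+1 := ltnW hi.
  by rewrite extend_env_wit ?wit_var_gt ?yvar_lt // /f witness_env_yvar // hi.
- move=> s i l hi hl; have hi1 : i < t.+1 := ltnW hi; have hl1 : l < t.+1 by lia.
  by rewrite extend_env_wit ?wit_var_gt ?wvar_lt // /f witness_env_wvar // /W (ltn_eqF hi).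
- move=> s l hl; have hl1 : l < t.+1 := ltnW hl.
  by rewrite extend_env_wit ?wit_var_gt ?wvar_lt // /f witness_env_wvar // /W eqxx.
- by rewrite extend_env_low // hge -[a']invgK ea eb hsz.
Qed.

End BetaSemantics.

Local Open Scope group_scope.

Theorem lemma3p5 :
  exists c : nat, forall k v : nat, 0 < k -> 1 < v ->
    exists beta : eform,
      all (fun i => i < k.+1) (efv beta) /\
      esize beta <= c * (k * clog v + clog v ^ 2) /\
      forall (gT : finGroupType) (G : {group gT}), #|G| <= v ->
        forall e : nat -> gT, (forall i, e i \in G) ->
          (esat G e beta <-> e 0%N \in <<[set e (val i).+1 | i : 'I_k]>>).
Proof.
exists 300 => k v hk hv; set n := clog v.
have hn : 0 < n by rewrite up_log_gt0 hv.
have hvn : v <= (2 ^ n)%N by apply: up_logP.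
exists (beta k n.+1); split; first exact: efv_beta.
split; first by have := esize_beta k n.+1; nia.
move=> gT G hG e he; split; first exact: beta_sound.
by apply: beta_complete => //; rewrite expnS; lia.
Qed.
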